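(* Let $p$ be a prime with $p\equiv 1\pmod 8$ and $p \equiv 2 \pmod 3$, and let $n\ge 2$ be an integer. Let $(\alpha,\beta,\kappa)\in\mathbb{Z}^3$ be nonzero integers such that: (B1) $\alpha$ and $\beta$ are odd and $\gcd(\alpha,3)=\gcd(\alpha,p)=\gcd(\alpha,\beta)=\gcd(\beta,p)=1$; (B2) for every odd prime $l\ne 3$ dividing $\alpha\beta$, $p$ is a square in $\mathbb{Q}_l^\times$; (B3) $v_3(\kappa)$ is an odd positive integer and $v_3(\kappa)<2n-1$; (B4) $\kappa\not\equiv 0 \pmod p$; (B5) for every odd prime $l\ne 3$ dividing $\kappa$, $p$ is a square in $\mathbb{Q}_l^\times$. Define $A = \frac{p\alpha^2-9\beta^2}{2}$, $B = 9(p\alpha^2-9\beta^2)\kappa^2$, $C = 9(p\alpha^2+9\beta^2)\kappa^2$, $D=\frac{p\alpha^2+9\beta^2}{2}$, $E = 81\alpha\beta\kappa^3$, $F = 18\alpha\beta\kappa$, $G = 3\alpha\beta$. Then $(A,B,C,D,E,F,G)$ satisfies Hypothesis FM with respect to $(p,n)$.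
   Context: $v_l$ denotes the $l$-adic valuation. Hypothesis FM. Let $p$ be a prime with $p\equiv 1 \pmod 8$ and $n\ge 1$ an integer. A septuple $(A,B,C,D,E,F,G)\in\mathbb{Z}^7$, not all zero, satisfies Hypothesis FM with respect to $(p,n)$ if: (A1) $B^2 - C^2 + 2pEF = 0$, $2AB - 2CD + pF^2 = 0$, and $A^2 - D^2 + pG^2 = 0$; (A2) for every odd prime $l$ with $l\ne 3$, $l\ne p$ and $l\mid E$: $p$ is a square in $\mathbb{Q}_l^\times$ or $v_l(E)-v_l(G)<6n$; (A3) $\gcd(A,D,G)=1$, $E\not\equiv 0 \pmod p$ and $G\not\equiv 0\pmod p$; (A4) for every odd prime $l$ with $l\ne 3$, $l\ne p$ and $l \mid \gcd(AC-BD,\ DE-CF,\ AE-BF)$: $p$ is a square in $\mathbb{Q}_l^\times$; (A5) there is an integer $H$ with $G - EH^6\equiv 0 \pmod p$ such that $A+\zeta BH^4$ is a quadratic non-residue in $\mathbb{F}_p^\times$ for every cube root of unity $\zeta\in\mathbb{F}_p^\times$; and, if $3$ is a quadratic non-residue in $\mathbb{F}_p^\times$, additionally: (A6) $v_3(E)-v_3(G)<6n$; (A7) $A+B\not\equiv 0\pmod 3$ and $G\equiv 0 \pmod 3$. *)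

From mathcomp Require Import all_boot all_order all_algebra.
Set Implicit Arguments. Unset Strict Implicit. Unset Printing Implicit Defensive.
Import Order.TTheory GRing.Theory Num.Theory.
Local Open Scope ring_scope.

(* l-adic valuation of an integer (for x <> 0); as an int so that
   differences of valuations are honest integers. *)
Definition vadic (l : nat) (x : int) : int := (logn l `|x|%N)%:Z.

(* For a nonzero integer a, being a square in Q_l^x is
   the same as being a square in Z_l (a square root y of a has
   v_l(y) = v_l(a)/2 >= 0), and by compactness of Z_l this is the same as
   being a square modulo l^k for every k. *)
Definition sq_Ql (l : nat) (a : int) : Prop :=
  forall k : nat, exists x : int, ((l ^ k)%N%:Z %| x ^+ 2 - a)%Z.

Definition toFp (p : nat) (z : int) : 'F_p := z%:~R.

Definition qnr (p : nat) (x : 'F_p) : Prop :=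
  x != 0 /\ ~ (exists y : 'F_p, y ^+ 2 = x).

Definition HypFM (p n : nat) (A B C D E F G : int) : Prop :=
  ~ (A = 0 /\ B = 0 /\ C = 0 /\ D = 0 /\ E = 0 /\ F = 0 /\ G = 0) /\
  [/\ B ^+ 2 - C ^+ 2 + 2 * p%:Z * E * F = 0,
      2 * A * B - 2 * C * D + p%:Z * F ^+ 2 = 0 &
      A ^+ 2 - D ^+ 2 + p%:Z * G ^+ 2 = 0] /\
  (forall l : nat, prime l -> odd l -> l != 3%N -> l != p ->
     (l%:Z %| E)%Z -> sq_Ql l p%:Z \/ vadic l E - vadic l G < (6 * n)%N%:Z) /\
  [/\ gcdz (gcdz A D) G = 1%N, ~~ (p%:Z %| E)%Z & ~~ (p%:Z %| G)%Z] /\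
  (forall l : nat, prime l -> odd l -> l != 3%N -> l != p ->
     (l%:Z %| gcdz (gcdz (A * C - B * D) (D * E - C * F)) (A * E - B * F))%Z ->
     sq_Ql l p%:Z) /\
  (exists H : int, (p%:Z %| G - E * H ^+ 6)%Z /\
     forall zeta : 'F_p, zeta != 0 -> zeta ^+ 3 = 1 ->
       qnr (toFp p A + zeta * toFp p B * toFp p H ^+ 4)) /\
  (qnr (toFp p 3) ->
     vadic 3 E - vadic 3 G < (6 * n)%N%:Z /\
     ~~ (3 %| A + B)%Z /\ (3 %| G)%Z).

From mathcomp Require Import all_boot all_order all_algebra all_field all_solvable.
From mathcomp Require Import zify ring.
Set Implicit Arguments. Unset Strict Implicit. Unset Printing Implicit Defensive.
Import Order.TTheory GRing.Theory Num.Theory.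
Local Open Scope ring_scope.

(* Each identity of (A1) is a multiple of A^2 - D^2 + p G^2, which vanishes
   because A + D = p alpha^2 and D - A = 9 beta^2.  Up to powers of 3, E,
   DE - CF and AE - BF are alpha beta kappa^3, D alpha beta kappa^3 and
   A alpha beta kappa^3, and A, D are coprime, so (A2)-(A4) reduce to
   (B1), (B2), (B5).  For (A5): since p = 2 mod 3, zeta = 1 is the only cube
   root of unity mod p; 3 kappa is a nonzero square mod p, and H = 1/sqrt(3 kappa)
   gives G = E H^6 and A + B H^4 = 3 A mod p, with A = -9 beta^2 / 2 a square
   and 3 a non-square mod p.  These quadratic-residue facts come from p = 1 mod 8,
   p = 2 mod 3 and quadratic reciprocity, proved with Gauss sums. *)


Lemma finField_expf_card_pred (F : finFieldType) (x : F) :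
  x != 0 -> x ^+ #|F|.-1 = 1.
Proof.
move=> x0; apply: (mulfI x0); rewrite mulr1 -exprS prednK ?expf_card //.
exact: ltnW (card_finNzRing_gt1 F).
Qed.

Lemma finField_prim_root (F : finFieldType) :
  exists g : F, (#|F|.-1).-primitive_root g.
Proof.
have /hasP[g _ g_prim] : has (#|F|.-1).-primitive_root (enum (predC1 (0 : F))).
  apply: has_prim_root; last by rewrite -cardE cardC1.
  - by rewrite -subn1 subn_gt0 card_finNzRing_gt1.
  - apply/allP => x; rewrite mem_enum !inE => x0.
    by rewrite unity_rootE finField_expf_card_pred.
  - exact: enum_uniq.
by exists g.
Qed.

Lemma oner_neqN1_pchar_odd (R : fieldType) (q : nat) :
  q \in [pchar R] -> odd q -> (1 : R) != -1.
Proof.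
move=> chR oq; apply/negP => /eqP e.
have : (2%:R : R) == 0 by rewrite -[2%N]/(1 + 1)%N natrD {2}e subrr.
rewrite -(dvdn_pcharf chR) => /(dvdn_leq (isT : (0 < 2)%N)).
by have := prime_gt1 (pcharf_prime chR); case: q oq {chR} => [|[|[|]]].
Qed.

Lemma natr_eq1_pchar (R : fieldType) (q m : nat) : q \in [pchar R] -> (0 < m)%N ->
  ((m%:R : R) == 1) = (q %| m.-1)%N.
Proof.
move=> chR m0; rewrite (dvdn_pcharf chR) -{1}(prednK m0) -addn1 natrD.
by rewrite -subr_eq0 addrK.
Qed.

Section EulerCriterion.
Variable p : nat.
Hypotheses (p_pr : prime p) (p_odd : odd p).

Lemma predn_half_double : p.-1 = (p./2 * 2)%N.
Proof. by rewrite -{1}(odd_double_half p) p_odd add1n /= muln2. Qed.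

Lemma half_prime_gt0 : (0 < p./2)%N.
Proof. by case: p p_pr p_odd => [|[|[|q]]]. Qed.

Lemma Fp_expf_pred (x : 'F_p) : x != 0 -> x ^+ p.-1 = 1.
Proof. by move=> x0; have := finField_expf_card_pred x0; rewrite card_Fp. Qed.

Lemma Fp_expf_half (x : 'F_p) : x != 0 -> x ^+ p./2 = 1 \/ x ^+ p./2 = -1.
Proof.
move=> x0; have := Fp_expf_pred x0; rewrite predn_half_double exprM => /eqP.
by rewrite sqrf_eq1 => /orP[] /eqP; [left | right].
Qed.

Lemma Fp_prim_root : exists g : 'F_p, (p.-1).-primitive_root g.
Proof. by have [g] := finField_prim_root 'F_p; rewrite card_Fp //; exists g. Qed.

Lemma Fp_euler_criterion (x : 'F_p) :
  x != 0 -> (exists y, y ^+ 2 = x) <-> x ^+ p./2 = 1.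
Proof.
move=> x0; split.
  case=> y y2x; have y0 : y != 0 by apply: contraNneq x0 => y0; rewrite -y2x y0 expr0n.
  by rewrite -y2x -exprM mulnC -predn_half_double Fp_expf_pred.
move=> x_half; have [g g_prim] := Fp_prim_root.
have [[i _] /= xgi] := prim_rootP g_prim (Fp_expf_pred x0).
move: x_half; rewrite xgi -exprM => /eqP.
rewrite -(prim_order_dvd g_prim) predn_half_double [(i * _)%N]mulnC.
rewrite dvdn_pmul2l ?half_prime_gt0 // => /dvdnP[j ->].
by exists (g ^+ j); rewrite -exprM mulnC.
Qed.

Lemma Fp_exists_nonsquare : exists g : 'F_p, g != 0 /\ g ^+ p./2 = -1.
Proof.
have [g g_prim] := Fp_prim_root.
have g0 : g != 0.
  apply/eqP => g0; have := prim_expr_order g_prim.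
  by rewrite g0 expr0n gtn_eqF ?(prim_order_gt0 g_prim).
exists g; split => //; case: (Fp_expf_half g0) => // /eqP.
rewrite -(prim_order_dvd g_prim) predn_half_double.
by move=> /(dvdn_leq half_prime_gt0); have := half_prime_gt0; lia.
Qed.

End EulerCriterion.

Section GaussSum.
Variables (p l : nat) (F : fieldType) (z : F).
Hypotheses (p_pr : prime p) (p4 : (p %% 4 = 1)%N) (pcharF : l \in [pchar F])
  (l_odd : odd l) (p_neq_l : p != l) (z_prim : p.-primitive_root z).

Let p_odd : odd p. Proof. lia. Qed.
Let l_pr : prime l. Proof. exact: pcharf_prime pcharF. Qed.
Let Fp_N1_neq1 : (-1 : 'F_p) != 1.
Proof. by rewrite eq_sym; exact: oner_neqN1_pchar_odd (pchar_Fp p_pr) p_odd. Qed.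

(* Valued in a field of characteristic l, so that the Frobenius x |-> x ^+ l
   acts on the Gauss sum. *)
Definition legendre (a : 'F_p) : F :=
  if a == 0 then 0 else if a ^+ p./2 == 1 then 1 else -1.
Definition addchar (a : 'F_p) : F := z ^+ (nat_of_ord a).
Definition gauss_sum := \sum_a legendre a * addchar a.

Lemma legendre0 : legendre 0 = 0. Proof. by rewrite /legendre eqxx. Qed.

Lemma legendreM a b : legendre (a * b) = legendre a * legendre b.
Proof.
rewrite /legendre mulf_eq0; have [->|a0] := eqVneq a 0; first by rewrite !mul0r.
have [->|b0] := eqVneq b 0; first by rewrite !mulr0 orbT.
rewrite /= exprMn.
by case: (Fp_expf_half p_pr p_odd a0) => ->; case: (Fp_expf_half p_pr p_odd b0) => ->;
  rewrite ?mulr1 ?mul1r ?mulN1r ?opprK ?eqxx ?(negbTE Fp_N1_neq1) ?mulr1 ?mulN1r ?opprK.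
Qed.

Lemma legendre_sqr a : a != 0 -> legendre a * legendre a = 1.
Proof. by rewrite /legendre => /negbTE ->; case: ifP; rewrite ?mulr1 ?mulrNN ?mulr1. Qed.

Lemma legendreV a : a != 0 -> legendre a^-1 = legendre a.
Proof.
move=> a0; have la : legendre a * legendre a^-1 = 1.
  by rewrite -legendreM mulfV // /legendre oner_eq0 expr1n eqxx.
by rewrite -[LHS]mul1r -(legendre_sqr a0) -mulrA la mulr1.
Qed.

Lemma legendreN1 : legendre (-1) = 1.
Proof.
rewrite /legendre oppr_eq0 oner_eq0 -signr_odd.
by have -> : odd p./2 = false by lia.
Qed.

Lemma legendre_pchar_exp a : legendre a ^+ l = legendre a.
Proof.
rewrite /legendre; case: ifP => _; first by rewrite expr0n gtn_eqF ?prime_gt0.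
by case: ifP => _; rewrite ?expr1n // -signr_odd l_odd expr1.
Qed.

Lemma sum_legendre : \sum_a legendre a = 0.
Proof.
have [g [g0 g_half]] := Fp_exists_nonsquare p_pr p_odd.
have lg : legendre g = -1 by rewrite /legendre (negbTE g0) g_half (negbTE Fp_N1_neq1).
have : \sum_a legendre a = - \sum_a legendre a.
  rewrite {1}(reindex_inj (mulfI g0)) /= -mulN1r mulr_sumr.
  by apply: eq_bigr => a _; rewrite legendreM lg.
move/eqP; rewrite -subr_eq0 opprK -mulr2n -mulr_natr mulf_eq0 => /orP[/eqP //|].
by rewrite -(dvdn_pcharf pcharF) => /(dvdn_leq (isT : (0 < 2)%N));
  case: l l_odd l_pr => [|[|[|]]].
Qed.

Let z_order : z ^+ (Zp_trunc (pdiv p)).+2 = 1.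
Proof. by rewrite Fp_cast // prim_expr_order. Qed.

Lemma addchar0 : addchar 0 = 1. Proof. by rewrite /addchar expr0. Qed.

Lemma addcharD a b : addchar (a + b) = addchar a * addchar b.
Proof. by rewrite /addchar -exprD -[RHS](expr_mod _ z_order). Qed.

Lemma addchar_pchar_exp a : addchar a ^+ l = addchar (l%:R * a).
Proof.
rewrite mulr_natl; elim: l => [|m IHm]; first by rewrite mulr0n addchar0 expr0.
by rewrite mulrS addcharD -IHm exprS.
Qed.

Lemma sum_addchar : \sum_a addchar a = 0.
Proof.
have := subrX1 z (Zp_trunc (pdiv p)).+2; rewrite z_order subrr => /esym/eqP.
rewrite mulf_eq0 subr_eq0 => /orP[/eqP z1|/eqP //].
have := prim_order_dvd z_prim 1; rewrite expr1 z1 eqxx dvdn1 => /eqP p1.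
by exfalso; move: (prime_gt1 p_pr); rewrite p1.
Qed.

Lemma sum_addcharM t : \sum_a addchar (a * t) = if t == 0 then (p%:R : F) else 0.
Proof.
have [->|t0] := eqVneq t 0.
  by under eq_bigr do rewrite mulr0 addchar0; rewrite sumr_const card_Fp.
by rewrite -[RHS]sum_addchar [RHS](reindex_inj (mulIf t0)).
Qed.

Lemma gauss_sum_sqr : gauss_sum * gauss_sum = p%:R.
Proof.
(* Substitute b = a c in the double sum, then sum over a first. *)
rewrite /gauss_sum mulr_suml.
transitivity (\sum_a \sum_c legendre c * addchar (a * (1 + c))).
  apply: eq_bigr => a _; rewrite mulr_sumr.
  have [->|a0] := eqVneq a 0.
    rewrite legendre0; under eq_bigr do rewrite !mul0r.
    by rewrite big1 //; under eq_bigr do rewrite mul0r addchar0 mulr1;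
      rewrite sum_legendre.
  rewrite (reindex_inj (mulfI a0)) /=; apply: eq_bigr => c _.
  rewrite legendreM mulrDr mulr1 addcharD.
  transitivity ((legendre a * legendre a) * (legendre c * (addchar a * addchar (a * c)))).
    by ring.
  by rewrite legendre_sqr // mul1r.
rewrite exchange_big /=; under eq_bigr do rewrite -mulr_sumr sum_addcharM.
rewrite (bigD1 (-1)) //= subrr eqxx legendreN1 mul1r big1 ?addr0 // => c c1.
by rewrite addrC addr_eq0 (negbTE c1) mulr0.
Qed.

Lemma gauss_sum_pchar_exp : gauss_sum ^+ l = legendre l%:R * gauss_sum.
Proof.
have l0 : (l%:R : 'F_p) != 0.
  by rewrite -(dvdn_pcharf (pchar_Fp p_pr)) dvdn_prime2.
rewrite -(pFrobenius_autE pcharF) /gauss_sum rmorph_sum /=.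
under eq_bigr do rewrite rmorphM /= !pFrobenius_autE legendre_pchar_exp addchar_pchar_exp.
rewrite (reindex_inj (mulfI (invr_neq0 l0))) mulr_sumr; apply: eq_bigr => b _ /=.
by rewrite [l%:R * _]mulrA mulfV // mul1r legendreM legendreV // mulrA.
Qed.

Lemma legendre_pchar : legendre l%:R = (p ^ l./2)%:R.
Proof.
have p0 : (p%:R : F) != 0 by rewrite -(dvdn_pcharf pcharF) dvdn_prime2 // eq_sym.
have g0 : gauss_sum != 0.
  by apply: contraNneq p0 => g0; rewrite -gauss_sum_sqr g0 mul0r.
have := gauss_sum_pchar_exp; rewrite -{1}(odd_double_half l) l_odd add1n exprS mulrC.
by move/(mulIf g0) => <-; rewrite -muln2 mulnC exprM expr2 gauss_sum_sqr natrX.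
Qed.

End GaussSum.

(* The Gauss sum lives in a finite field of characteristic l containing the
   p-th roots of unity, e.g. one of order l ^ (p - 1). *)
Lemma quadratic_reciprocity_1mod4 (p l : nat) :
  prime p -> (p %% 4 = 1)%N -> prime l -> odd l -> p != l ->
  (exists y : 'F_p, y ^+ 2 = l%:R) <-> (exists w : 'F_l, w ^+ 2 = p%:R).
Proof.
move=> p_pr p4 l_pr l_odd p_neq_l; have p_odd : odd p by lia.
have l0 : (l%:R : 'F_p) != 0 by rewrite -(dvdn_pcharf (pchar_Fp p_pr)) dvdn_prime2.
have p0 : (p%:R : 'F_l) != 0.
  by rewrite -(dvdn_pcharf (pchar_Fp l_pr)) dvdn_prime2 // eq_sym.
have p1 : (0 < p.-1)%N by have := prime_gt1 p_pr; lia.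
have [K pcharK cardK] := pPrimePowerField l_pr p1.
have [g g_prim] := finField_prim_root K.
have p_dvd : (p %| #|K|.-1)%N.
  rewrite cardK -(natr_eq1_pchar (pchar_Fp p_pr)) ?expn_gt0 ?prime_gt0 //.
  by rewrite natrX Fp_expf_pred.
have := legendre_pchar p_pr p4 pcharK l_odd p_neq_l (dvdn_prim_root g_prim p_dvd).
rewrite /legendre (negbTE l0) => leg.
have half_eq1 : ((p ^ l./2)%:R == 1 :> K) = ((p%:R : 'F_l) ^+ l./2 == 1).
  rewrite -natrX (natr_eq1_pchar pcharK) ?expn_gt0 ?prime_gt0 //.
  by rewrite (natr_eq1_pchar (pchar_Fp l_pr)) ?expn_gt0 ?prime_gt0.
rewrite (Fp_euler_criterion p_pr p_odd l0) (Fp_euler_criterion l_pr l_odd p0).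
split => [l_half | p_half]; first by apply/eqP; rewrite -half_eq1 -leg l_half eqxx.
move: leg; case: eqP => // _ leg; move: half_eq1.
by rewrite -leg p_half eqxx eq_sym (negbTE (oner_neqN1_pchar_odd pcharK l_odd)).
Qed.

Section SquaresModP.
Variable p : nat.
Hypothesis p_pr : prime p.

Lemma Fp_sqrN1 : (p %% 4 = 1)%N -> exists y : 'F_p, y ^+ 2 = -1.
Proof.
move=> p4; have p_odd : odd p by lia.
apply/(Fp_euler_criterion p_pr p_odd); first by rewrite oppr_eq0 oner_eq0.
by rewrite -signr_odd; have -> : odd p./2 = false by lia.
Qed.

Lemma Fp_sqr2 : (p %% 8 = 1)%N -> exists y : 'F_p, y ^+ 2 = 2%:R.
Proof.
(* w + w^-1 for a primitive 8th root of unity w. *)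
move=> p8; have [g g_prim] := Fp_prim_root p_pr.
have d8 : (8 %| p.-1)%N by apply/dvdnP; exists (p %/ 8)%N; lia.
have w_prim := dvdn_prim_root g_prim d8; set w := g ^+ _ in w_prim.
have w8 : w ^+ 8 = 1 := prim_expr_order w_prim.
have w4 : w ^+ 4 = -1.
  have : (w ^+ 4) ^+ 2 == 1 by rewrite -exprM w8.
  by rewrite sqrf_eq1 -(prim_order_dvd w_prim) => /orP[|/eqP].
exists (w + w ^+ 7); apply/eqP; rewrite -subr_eq0.
have -> : (w + w ^+ 7) ^+ 2 - 2%:R =
    w ^+ 2 * (1 + w ^+ 4) + (2%:R + w ^+ 6) * (w ^+ 8 - 1) by ring.
by rewrite w4 w8 !subrr !mulr0 addr0.
Qed.

Lemma Fp_sqr_prime (q : nat) : (p %% 4 = 1)%N -> prime q -> odd q -> q != p ->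
  sq_Ql q p%:Z -> exists y : 'F_p, y ^+ 2 = q%:R.
Proof.
move=> p4 q_pr q_odd q_neq_p /(_ 1%N)[x]; rewrite expn1 => q_dvd.
apply/(quadratic_reciprocity_1mod4 p_pr p4 q_pr q_odd); first by rewrite eq_sym.
exists x%:~R; move: q_dvd.
by rewrite (dvdz_pcharf (pchar_Fp q_pr)) rmorphB rmorphXn subr_eq0 => /eqP.
Qed.

Lemma Fp_nonsquare3 : (p %% 4 = 1)%N -> (p %% 3 = 2)%N ->
  ~ exists y : 'F_p, y ^+ 2 = 3%:R.
Proof.
move=> p4 p3; have p_neq3 : p != 3%N by apply/eqP => e; move: p3; rewrite e.
rewrite (quadratic_reciprocity_1mod4 p_pr p4 (isT : prime 3) (isT : odd 3) p_neq3).
by rewrite -Fp_nat_mod // p3 => -[[[|[|[|]]] ?]].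
Qed.

Lemma Fp_cube_root1 (z : 'F_p) : (p %% 3 = 2)%N -> z ^+ 3 = 1 -> z = 1.
Proof.
move=> p3 z3; have z0 : z != 0.
  by apply: contra_eq_neq z3 => ->; rewrite expr0n eq_sym oner_neq0.
have := Fp_expf_pred p_pr z0; have -> : p.-1 = (3 * (p %/ 3) + 1)%N by lia.
by rewrite exprD exprM z3 expr1n mul1r expr1.
Qed.

Lemma Fp_sqr_natr (m : nat) : (p %% 8 = 1)%N -> (0 < m)%N ->
  ~~ (p %| m)%N -> ~~ (3 %| m)%N ->
  (forall q, prime q -> odd q -> q != 3%N -> (q %| m)%N -> sq_Ql q p%:Z) ->
  exists y : 'F_p, y ^+ 2 = m%:R.
Proof.
move=> p8; elim/ltn_ind: m => m IHm m0 pNm tNm sq_m.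
have [m_lt1|m_gt1|->] := ltngtP m 1; last by exists 1; rewrite expr1n.
  by rewrite ltnNge m0 in m_lt1.
set q := pdiv m; have q_pr : prime q := pdiv_prime m_gt1.
have m_eq : m = (m %/ q * q)%N by rewrite divnK ?pdiv_dvd.
have [y1 y1_sqr] : exists y : 'F_p, y ^+ 2 = (m %/ q)%:R.
  have dvd_m r : (r %| m %/ q)%N -> (r %| m)%N by move=> r_dvd; rewrite m_eq dvdn_mulr.
  apply: IHm.
  - by rewrite ltn_Pdiv ?prime_gt1.
  - by rewrite divn_gt0 ?prime_gt0 // dvdn_leq ?pdiv_dvd.
  - exact: contra (dvd_m p) pNm.
  - exact: contra (dvd_m 3%N) tNm.
  - by move=> r r_pr r_odd r3 /dvd_m; apply: sq_m.
have [y2 y2_sqr] : exists y : 'F_p, y ^+ 2 = q%:R.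
  have [->|q_odd] := even_prime q_pr; first exact: Fp_sqr2.
  apply: Fp_sqr_prime => //; first lia.
  - by apply: contraNneq pNm => <-; rewrite pdiv_dvd.
  - apply: sq_m; rewrite ?pdiv_dvd //.
    by apply: contraNneq tNm => <-; rewrite pdiv_dvd.
by exists (y1 * y2); rewrite exprMn y1_sqr y2_sqr -natrM -m_eq.
Qed.

Lemma Fp_sqr_3k (k : int) : (p %% 8 = 1)%N -> k != 0 -> ~~ (p%:Z %| k)%Z ->
  odd (logn 3 `|k|) ->
  (forall q, prime q -> odd q -> q != 3%N -> (q%:Z %| k)%Z -> sq_Ql q p%:Z) ->
  exists w : 'F_p, w != 0 /\ 3%:R * k%:~R = w ^+ 2.
Proof.
(* |k| = 3 ^ v * m with v odd, and -1 is a square mod p. *)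
move=> p8 k0 pNk v_odd sq_k; have k_gt0 : (0 < `|k|)%N by rewrite absz_gt0.
have [m m_coprime k_eq] := pfactor_coprime (isT : prime 3) k_gt0.
set v := logn 3 `|k| in k_eq v_odd.
have dvd_k r : (r %| m)%N -> (r%:Z %| k)%Z.
  by move=> r_dvd; rewrite dvdzE /= k_eq dvdn_mulr.
have [s s_sqr] : exists s : 'F_p, s ^+ 2 = m%:R.
  apply: Fp_sqr_natr => //; last by move=> q ? ? ? /dvd_k; apply: sq_k.
  - by move: k_gt0; rewrite k_eq muln_gt0 => /andP[].
  - exact: contra (dvd_k p) pNk.
  - by rewrite -prime_coprime.
have [c c_sqr] : exists c : 'F_p, c ^+ 2 = (-1) ^+ (k < 0)%R.
  case: (k < 0)%R; first by apply: Fp_sqrN1; lia.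
  by exists 1; rewrite expr1n expr0.
have k0p : (k%:~R : 'F_p) != 0 by rewrite -(dvdz_pcharf (pchar_Fp p_pr)).
have three0 : (3%:R : 'F_p) != 0.
  rewrite -(dvdn_pcharf (pchar_Fp p_pr)) dvdn_prime2 //.
  by apply/eqP => p_eq3; move: p8; rewrite p_eq3.
have sqr_eq : 3%:R * k%:~R = (c * s * 3%:R ^+ (v.+1)./2) ^+ 2.
  rewrite {1}[k]intEsign rmorphM rmorphXn rmorphN1 /= -pmulrn k_eq natrM natrX.
  rewrite !exprMn c_sqr s_sqr -exprM.
  have -> : ((v.+1)./2 * 2 = v.+1)%N by lia.
  rewrite exprS; ring.
exists (c * s * 3%:R ^+ (v.+1)./2); split => //.
by rewrite -sqrf_eq0 -sqr_eq mulf_neq0.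
Qed.

End SquaresModP.

Lemma Euclid_dvdzM (q : nat) (x y : int) : prime q ->
  (q%:Z %| x * y)%Z = (q%:Z %| x)%Z || (q%:Z %| y)%Z.
Proof. by move=> q_pr; rewrite !dvdzE abszM Euclid_dvdM. Qed.

Lemma Euclid_dvdzX (q n : nat) (x : int) : prime q ->
  (q%:Z %| x ^+ n)%Z -> (q%:Z %| x)%Z.
Proof. by move=> q_pr; rewrite !dvdzE abszX Euclid_dvdX // => /andP[]. Qed.

Lemma prime_dvdz_expr3 (q j : nat) : prime q -> (q%:Z %| 3 ^+ j)%Z -> q = 3%N.
Proof.
move=> q_pr /(Euclid_dvdzX q_pr); rewrite dvdzE /= => q_dvd3.
by apply/eqP; rewrite -dvdn_prime2.
Qed.

Lemma gcdz1_no_prime_dvd (q : nat) (x y : int) : prime q -> gcdz x y = 1%N ->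
  (q%:Z %| x)%Z -> (q%:Z %| y)%Z -> False.
Proof.
move=> q_pr xy1 qx qy; have : (q%:Z %| gcdz x y)%Z by rewrite dvdz_gcd qx qy.
by rewrite xy1 dvdzE /= dvdn1 => /eqP q1; rewrite q1 in q_pr.
Qed.

Lemma dvd2_oddM_sqrD (c d x y : int) :
  ~~ (2 %| c)%Z -> ~~ (2 %| d)%Z -> ~~ (2 %| x)%Z -> ~~ (2 %| y)%Z ->
  (2 %| c * x ^+ 2 + d * y ^+ 2)%Z.
Proof.
have F2_neq0 (u : 'F_2) : u != 0 -> u = 1 by case: u => [[|[|]]] // ? _; apply/val_inj.
rewrite !(dvdz_pcharf (pchar_Fp (isT : prime 2))) !expr2 intrD !intrM.
by move=> /F2_neq0 -> /F2_neq0 -> /F2_neq0 -> /F2_neq0 ->.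
Qed.

Section ToFpMorphism.
Variable p : nat.

Lemma toFpD x y : toFp p (x + y) = toFp p x + toFp p y. Proof. exact: intrD. Qed.
Lemma toFpN x : toFp p (- x) = - toFp p x. Proof. exact: intrN. Qed.
Lemma toFpM x y : toFp p (x * y) = toFp p x * toFp p y. Proof. exact: intrM. Qed.
Lemma toFpX x m : toFp p (x ^+ m) = toFp p x ^+ m. Proof. exact: rmorphXn. Qed.
Lemma toFp_nat m : toFp p m%:R = m%:R. Proof. exact: mulrz_nat. Qed.
Lemma toFp_natz m : toFp p m%:Z = m%:R. Proof. by []. Qed.

End ToFpMorphism.

Definition toFpE := (toFpD, toFpN, toFpM, toFpX, toFp_nat, toFp_natz).

Section FMConstruction.
Variables (p n : nat) (a b k A D : int).
Hypotheses (p_pr : prime p) (p8 : (p %% 8 = 1)%N) (p3 : (p %% 3 = 2)%N).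
Hypotheses (a0 : a != 0) (b0 : b != 0) (k0 : k != 0).
Hypotheses (a_coprime3 : gcdz a 3 = 1%N) (a_coprimep : gcdz a p%:Z = 1%N)
  (ab_coprime : gcdz a b = 1%N) (b_coprimep : gcdz b p%:Z = 1%N).
Hypothesis sq_ab : forall l : nat, prime l -> odd l -> l != 3%N ->
  (l%:Z %| a * b)%Z -> sq_Ql l p%:Z.
Hypotheses (k3_odd : odd (logn 3 `|k|)) (k3_lt : (logn 3 `|k| < 2 * n - 1)%N)
  (pNk : ~~ (p%:Z %| k)%Z).
Hypothesis sq_k : forall l : nat, prime l -> odd l -> l != 3%N ->
  (l%:Z %| k)%Z -> sq_Ql l p%:Z.
Hypotheses (A_half : p%:Z * a ^+ 2 - 9 * b ^+ 2 = A * 2)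
  (D_half : p%:Z * a ^+ 2 + 9 * b ^+ 2 = D * 2).

Local Notation B := (9 * (A * 2) * k ^+ 2).
Local Notation C := (9 * (D * 2) * k ^+ 2).
Local Notation E := (81 * a * b * k ^+ 3).
Local Notation F := (18 * a * b * k).
Local Notation G := (3 * a * b).

Let p4 : (p %% 4 = 1)%N. Proof. lia. Qed.
Let p_neq3 : p != 3%N. Proof. by apply/eqP => p_eq3; move: p3; rewrite p_eq3. Qed.

Lemma A_plus_D : A + D = p%:Z * a ^+ 2.
Proof. by apply: (@mulIf _ 2) => //; rewrite mulrDl -A_half -D_half; ring. Qed.

Lemma D_minus_A : D - A = 9 * b ^+ 2.
Proof. by apply: (@mulIf _ 2) => //; rewrite mulrBl -A_half -D_half; ring. Qed.

Lemma FM_quadric : A ^+ 2 - D ^+ 2 + p%:Z * G ^+ 2 = 0.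
Proof.
have -> : A ^+ 2 - D ^+ 2 + p%:Z * G ^+ 2 =
    (A + D) * (A - D) + (p%:Z * a ^+ 2) * (9 * b ^+ 2) by ring.
by rewrite A_plus_D -D_minus_A; ring.
Qed.

Lemma no_prime_dvd_AD (q : nat) : prime q -> (q%:Z %| A)%Z -> (q%:Z %| D)%Z -> False.
Proof.
move=> q_pr qA qD.
have : (q%:Z %| p%:Z * a ^+ 2)%Z by rewrite -A_plus_D rpredD.
have : (q%:Z %| 9 * b ^+ 2)%Z by rewrite -D_minus_A rpredB.
rewrite (_ : 9 = 3 ^+ 2) // Euclid_dvdzM //.
case/orP=> [/(prime_dvdz_expr3 q_pr) q3|/(Euclid_dvdzX q_pr) qb]; rewrite Euclid_dvdzM //.
  case/orP=> [qp|/(Euclid_dvdzX q_pr) qa].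
    by move: qp; rewrite dvdzE /= dvdn_prime2 // q3 eq_sym (negbTE p_neq3).
  by apply: gcdz1_no_prime_dvd a_coprime3 qa _; rewrite q3.
case/orP=> [qp|/(Euclid_dvdzX q_pr) qa]; last exact: gcdz1_no_prime_dvd ab_coprime qa qb.
have qp_eq : q = p by apply/eqP; rewrite -dvdn_prime2.
by apply: gcdz1_no_prime_dvd b_coprimep qb _; rewrite qp_eq.
Qed.

Lemma G_neq0 : G != 0.
Proof. by rewrite !mulf_neq0. Qed.

Lemma FM_A1 : [/\ B ^+ 2 - C ^+ 2 + 2 * p%:Z * E * F = 0,
  2 * A * B - 2 * C * D + p%:Z * F ^+ 2 = 0 & A ^+ 2 - D ^+ 2 + p%:Z * G ^+ 2 = 0].
Proof.
have quadric_mul c X : X = c * (A ^+ 2 - D ^+ 2 + p%:Z * G ^+ 2) -> X = 0.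
  by move->; rewrite FM_quadric mulr0.
split; last exact: FM_quadric.
- by apply: (quadric_mul (324 * k ^+ 4)); ring.
- by apply: (quadric_mul (36 * k ^+ 2)); ring.
Qed.

Lemma sq_Ql_of_dvd_E (l : nat) : prime l -> odd l -> l != 3%N ->
  (l%:Z %| E)%Z -> sq_Ql l p%:Z.
Proof.
move=> l_pr l_odd l3; have -> : E = 3 ^+ 4 * (a * b) * k ^+ 3 by ring.
rewrite Euclid_dvdzM // Euclid_dvdzM //.
case/orP=> [/orP[/(prime_dvdz_expr3 l_pr) l_eq3|]|/(Euclid_dvdzX l_pr)].
- by rewrite l_eq3 in l3.
- exact: sq_ab.
- exact: sq_k.
Qed.

Lemma gcdz_AD : gcdz A D = 1%N.
Proof.
rewrite /gcdz; congr Posz.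
have [g0|g_gt1|//] := ltngtP (gcdn `|A| `|D|) 1.
  move: g0; rewrite ltnS leqn0 -[_ == 0%N]negbK -lt0n gcdn_gt0 !absz_gt0 negb_or !negbK.
  move=> /andP[/eqP A0 /eqP D0].
  move: A_plus_D; rewrite A0 D0 add0r => /esym/eqP.
  rewrite mulf_eq0 expf_eq0 (negbTE a0) andbF orbF => /eqP.
  by have := prime_gt0 p_pr; lia.
exfalso; apply: (no_prime_dvd_AD (pdiv_prime g_gt1)); rewrite dvdzE.
- exact: dvdn_trans (pdiv_dvd _) (dvdn_gcdl _ _).
- exact: dvdn_trans (pdiv_dvd _) (dvdn_gcdr _ _).
Qed.

Lemma p_Ndvd_G : ~~ (p%:Z %| G)%Z.
Proof.
have -> : G = 3 ^+ 1 * (a * b) by ring.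
rewrite !Euclid_dvdzM //.
apply/negP => /orP[/(prime_dvdz_expr3 p_pr) p_eq3|/orP[pa|pb]].
- by move: p_neq3; rewrite p_eq3.
- exact: gcdz1_no_prime_dvd p_pr a_coprimep pa (dvdzz _).
- exact: gcdz1_no_prime_dvd p_pr b_coprimep pb (dvdzz _).
Qed.

Lemma p_Ndvd_E : ~~ (p%:Z %| E)%Z.
Proof.
have -> : E = G * 3 ^+ 3 * k ^+ 3 by ring.
rewrite Euclid_dvdzM // Euclid_dvdzM // (negbTE p_Ndvd_G) /=.
apply/negP => /orP[/(prime_dvdz_expr3 p_pr) p_eq3|/(Euclid_dvdzX p_pr) pk].
- by move: p_neq3; rewrite p_eq3.
- by move: pNk; rewrite pk.
Qed.

Lemma sq_Ql_of_dvd_minors (l : nat) : prime l -> odd l -> l != 3%N ->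
  (l%:Z %| gcdz (gcdz (A * C - B * D) (D * E - C * F)) (A * E - B * F))%Z ->
  sq_Ql l p%:Z.
Proof.
move=> l_pr l_odd l3; rewrite !dvdz_gcd => /andP[/andP[_ l_DE_CF] l_AE_BF].
have [l_ab|lNab] := boolP (l%:Z %| a * b)%Z; first exact: sq_ab.
have [l_k|lNk] := boolP (l%:Z %| k)%Z; first exact: sq_k.
have l_cancel X : (l%:Z %| - (3 ^+ 5 * X * (a * b * k ^+ 3)))%Z -> (l%:Z %| X)%Z.
  rewrite rpredN Euclid_dvdzM // Euclid_dvdzM // [(_ %| a * b * _)%Z]Euclid_dvdzM //.
  rewrite (negbTE lNab) /=.
  case/orP=> [/orP[/(prime_dvdz_expr3 l_pr) l_eq3|//]|/(Euclid_dvdzX l_pr) l_k].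
  - by rewrite l_eq3 in l3.
  - by rewrite l_k in lNk.
exfalso; apply: (no_prime_dvd_AD l_pr); apply: l_cancel.
- by have -> : - (3 ^+ 5 * A * (a * b * k ^+ 3)) = A * E - B * F by ring.
- by have -> : - (3 ^+ 5 * D * (a * b * k ^+ 3)) = D * E - C * F by ring.
Qed.

Let Fp2_neq0 : (2%:R : 'F_p) != 0.
Proof.
rewrite -(dvdn_pcharf (pchar_Fp p_pr)) dvdn_prime2 //.
by apply/eqP => p_eq2; move: p8; rewrite p_eq2.
Qed.

Let Fp3_neq0 : (3%:R : 'F_p) != 0.
Proof. by rewrite -(dvdn_pcharf (pchar_Fp p_pr)) dvdn_prime2. Qed.

Let b_Fp_neq0 : toFp p b != 0.
Proof.
rewrite /toFp -(dvdz_pcharf (pchar_Fp p_pr)); apply/negP => pb.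
exact: gcdz1_no_prime_dvd p_pr b_coprimep pb (dvdzz _).
Qed.

Lemma toFp_A_sqr : exists t : 'F_p, t != 0 /\ toFp p A = t ^+ 2.
Proof.
have A2 : toFp p A * 2%:R = - (9%:R * toFp p b ^+ 2).
  have := congr1 (toFp p) A_half; rewrite !toFpE (pchar_Fp_0 p_pr).
  by rewrite mul0r add0r => <-.
have A0 : toFp p A != 0.
  apply/eqP => A0; move: A2; rewrite A0 mul0r => /esym/eqP.
  have nine : 9%:R = 3%:R * 3%:R :> 'F_p by rewrite -natrM.
  by rewrite oppr_eq0 nine; apply/negP; rewrite !mulf_neq0 ?expf_neq0.
have [i i2] := Fp_sqrN1 p_pr p4; have [r r2] := Fp_sqr2 p_pr p8.
set t := 3%:R * toFp p b * (i * r) / 2%:R.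
have At : toFp p A = t ^+ 2.
  apply: (mulIf Fp2_neq0); rewrite A2 /t expr_div_n !exprMn i2 r2; field.
  by rewrite -[4%:R]/((2 * 2)%N%:R : 'F_p) natrM mulf_neq0.
by exists t; split => //; apply: contraNneq A0 => t0; rewrite At t0 expr0n.
Qed.

Lemma FM_A5 : exists H : int, (p%:Z %| G - E * H ^+ 6)%Z /\
  forall zeta : 'F_p, zeta != 0 -> zeta ^+ 3 = 1 ->
    qnr (toFp p A + zeta * toFp p B * toFp p H ^+ 4).
Proof.
have [w [w0 w2]] := Fp_sqr_3k p_pr p8 k0 pNk k3_odd sq_k.
set h := w^-1; have kh : 3%:R * toFp p k * h ^+ 2 = 1.
  by rewrite /toFp w2 /h exprVn mulfV // expf_neq0.
have hH : (nat_of_ord h)%:R = h by exact: natr_Zp.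
exists (nat_of_ord h)%:Z; split.
  rewrite (dvdz_pcharf (pchar_Fp p_pr)) -/(toFp p _) !toFpE hH; apply/eqP.
  transitivity (3%:R * toFp p a * toFp p b * (1 - (3%:R * toFp p k * h ^+ 2) ^+ 3)).
    by ring.
  by rewrite kh expr1n subrr mulr0.
move=> zeta _ /(Fp_cube_root1 p_pr p3) ->; rewrite mul1r.
have -> : toFp p A + toFp p B * toFp p (nat_of_ord h)%:Z ^+ 4 = toFp p A * 3%:R.
  rewrite !toFpE hH.
  transitivity (toFp p A * (1 + 2%:R * (3%:R * toFp p k * h ^+ 2) ^+ 2)); first ring.
  by rewrite kh; ring.
have [t [t0 At]] := toFp_A_sqr.
split; first by rewrite At mulf_neq0 ?expf_neq0.
case=> y y2; apply: (Fp_nonsquare3 p_pr p4 p3); exists (y / t).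
by rewrite expr_div_n y2 At mulrAC divff ?mul1r ?expf_neq0.
Qed.

Lemma vadic3_E_G : vadic 3 E - vadic 3 G < (6 * n)%N%:Z.
Proof.
have [a_gt0 b_gt0 k_gt0] : [/\ (0 < `|a|)%N, (0 < `|b|)%N & (0 < `|k|)%N].
  by rewrite !absz_gt0.
rewrite /vadic !abszM !lognM ?muln_gt0 ?a_gt0 ?b_gt0 ?k_gt0 //.
rewrite (_ : logn 3 `|81| = 4%N) // (_ : logn 3 `|3| = 1%N) //.
lia.
Qed.

Lemma three_Ndvd_AB : ~~ (3 %| A + B)%Z.
Proof.
apply/negP => dvd3; have dvd3A : (3 %| A)%Z.
  have -> : A = (A + B) - 3 * (6 * A * k ^+ 2) by ring.
  by rewrite rpredB // dvdz_mulr.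
have : (3%:Z %| p%:Z * a ^+ 2)%Z.
  have -> : p%:Z * a ^+ 2 = A * 2 + 3 * (3 * b ^+ 2) by rewrite -A_half; ring.
  by rewrite rpredD ?dvdz_mulr ?dvdz_mull.
rewrite Euclid_dvdzM // => /orP[|/(Euclid_dvdzX (isT : prime 3)) dvd3a].
  by rewrite dvdzE /= /dvdn p3.
exact: gcdz1_no_prime_dvd (isT : prime 3) a_coprime3 dvd3a (dvdzz _).
Qed.

Lemma HypFM_of_halves :
  HypFM p n A (9 * (p%:Z * a ^+ 2 - 9 * b ^+ 2) * k ^+ 2)
    (9 * (p%:Z * a ^+ 2 + 9 * b ^+ 2) * k ^+ 2) D E F G.
Proof.
rewrite A_half D_half.
split; first by case=> _ [_ [_ [_ [_ [_ /eqP]]]]]; rewrite (negbTE G_neq0).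
split; first exact: FM_A1.
split; first by move=> l l_pr l_odd l3 _ l_E; left; apply: sq_Ql_of_dvd_E.
split; first by split; [rewrite gcdz_AD gcd1z | exact: p_Ndvd_E | exact: p_Ndvd_G].
split; first by move=> l l_pr l_odd l3 _; apply: sq_Ql_of_dvd_minors.
split; first exact: FM_A5.
move=> _; split; first exact: vadic3_E_G.
by split; [exact: three_Ndvd_AB | rewrite -mulrA dvdz_mulr].
Qed.

End FMConstruction.

Theorem lemma3p1 (p n : nat) (alpha beta kappa : int) :
  prime p -> (p %% 8 = 1)%N -> (p %% 3 = 2)%N -> (2 <= n)%N ->
  alpha != 0 -> beta != 0 -> kappa != 0 ->
  (* (B1) *)
  ~~ (2 %| alpha)%Z -> ~~ (2 %| beta)%Z ->
  gcdz alpha 3 = 1%N -> gcdz alpha p%:Z = 1%N -> gcdz alpha beta = 1%N ->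
  gcdz beta p%:Z = 1%N ->
  (* (B2) *)
  (forall l : nat, prime l -> odd l -> l != 3%N ->
     (l%:Z %| alpha * beta)%Z -> sq_Ql l p%:Z) ->
  (* (B3) *)
  odd (logn 3 `|kappa|) -> (0 < logn 3 `|kappa|)%N ->
  (logn 3 `|kappa| < 2 * n - 1)%N ->
  (* (B4) *)
  ~~ (p%:Z %| kappa)%Z ->
  (* (B5) *)
  (forall l : nat, prime l -> odd l -> l != 3%N ->
     (l%:Z %| kappa)%Z -> sq_Ql l p%:Z) ->
  HypFM p n
    ((p%:Z * alpha ^+ 2 - 9 * beta ^+ 2) %/ 2)%Z
    (9 * (p%:Z * alpha ^+ 2 - 9 * beta ^+ 2) * kappa ^+ 2)
    (9 * (p%:Z * alpha ^+ 2 + 9 * beta ^+ 2) * kappa ^+ 2)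
    ((p%:Z * alpha ^+ 2 + 9 * beta ^+ 2) %/ 2)%Z
    (81 * alpha * beta * kappa ^+ 3)
    (18 * alpha * beta * kappa)
    (3 * alpha * beta).
Proof.
move=> p_pr p8 p3 _ a0 b0 k0 a_odd b_odd a3 ap ab bp sq_ab k3_odd _ k3_lt pNk sq_k.
have p_odd : ~~ (2 %| p%:Z)%Z by rewrite dvdzE /=; lia.
have dvd2 d : ~~ (2 %| d)%Z -> (2 %| p%:Z * alpha ^+ 2 + d * beta ^+ 2)%Z.
  by move=> d_odd; apply: dvd2_oddM_sqrD.
apply: HypFM_of_halves => //; rewrite divzK //; [rewrite -mulNr|]; exact: dvd2.
Qed.
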